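(* Let $(D,\Gamma)$ be a consistent action theory, $n\ge0$, and let $s_0a_0s_1\dots a_{n-1}s_n$ be a trajectory in $D$ with $s_0=s_0^\Gamma$. Then the program $\pi$ has an answer set $X$ such that $s_t(X)=s_t$ for every $t\in\{0,\dots,n\}$ and $occ(a_t,t)\in X$ for every $t\in\{0,\dots,n-1\}$.
   Context: Action language $\mathcal{B}$: fix finite sets $\mathbf{F}$ of fluents and $\mathbf{A}$ of actions. A fluent literal is $f$ or $\neg f$ ($f\in\mathbf{F}$); the complement $\bar l$ of $f$ is $\neg f$ and of $\neg f$ is $f$. A set of fluent literals is consistent if it contains no pair $f,\neg f$; an interpretation is a maximal consistent set. For a set $u$ of literals, $u\models p_1\wedge\dots\wedge p_k$ means $\{p_1,\dots,p_k\}\subseteq u$. A domain description $D$ is a finite set of static causal laws $\mathbf{caused}(\{p_1,\dots,p_k\},f)$ (their set is $D_C$), dynamic causal laws $\mathbf{causes}(a,f,\{p_1,\dots,p_k\})$ and executability conditions $\mathbf{executable}(a,\{p_1,\dots,p_k\})$, with $a\in\mathbf{A}$ and $f,p_i$ fluent literals; $\Gamma$ is a set of propositions $\mathbf{initially}(f)$. A consistent set $u$ is closed under $D_C$ if for every $\mathbf{caused}(P,f)\in D_C$ with $P\subseteq u$, $f\in u$; $Cl_{D_C}(u)$ is the least consistent superset of $u$ closed under $D_C$ (undefined if none). A state is an interpretation closed under $D_C$. Action $a$ is executable in state $s$ if some $\mathbf{executable}(a,P)\in D$ has $P\subseteq s$. $E(a,s)=\{f\mid \mathbf{causes}(a,f,P)\in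 D,\ P\subseteq s\}$. $\Phi(a,s)=\{s'\mid s'\text{ a state},\ s'=Cl_{D_C}(E(a,s)\cup(s\cap s'))\}$ if $a$ is executable in $s$, and $\Phi(a,s)=\emptyset$ otherwise. A trajectory is a sequence $s_0a_0s_1\dots a_{m-1}s_m$ of states $s_i$ and actions $a_i$ with $s_{i+1}\in\Phi(a_i,s_i)$. $D$ is consistent if $\Phi(a,s)\ne\emptyset$ whenever $a$ is executable in state $s$; $(D,\Gamma)$ is consistent if $D$ is consistent and $s_0^\Gamma:=\{f\mid\mathbf{initially}(f)\in\Gamma\}$ is a state of $D$. Answer sets: a ground normal program consists of rules $h\leftarrow b_1,\dots,b_m,\mathit{not}\,c_1,\dots,\mathit{not}\,c_r$ and constraints $\bot\leftarrow b_1,\dots,b_m,\mathit{not}\,c_1,\dots,\mathit{not}\,c_r$. For a set $S$ of atoms, the reduct $\Pi^S$ deletes every rule/constraint containing $\mathit{not}\,c$ with $c\in S$ and deletes all $\mathit{not}$-literals from the rest; $S$ is an answer set of $\Pi$ if $S$ is the least set of atoms closed under the non-constraint rules of $\Pi^S$ and no constraint of $\Pi^S$ has its whole body contained in $S$. The program $\pi$ (ground; $t$ ranges over $\{0,\dots,n\}$ unless stated): (1) $holds(l,0)\leftarrow$ for each $\mathbf{initially}(l)\in\Gamma$; (2) $possible(a,t)\leftarrow holds(p_1,t),\dots,holds(p_k,t)$ for each $\mathbf{executable}(a,\{p_1,\dots,p_k\})\in D$; (3) for $t\in\{0,\dots,n-1\}$, $holds(f,t+1)\leftarrow occ(a,t),possible(a,t),holds(p_1,t),\dots,holds(p_k,t)$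 for each $\mathbf{causes}(a,f,\{p_1,\dots,p_k\})\in D$; (4) $holds(f,t)\leftarrow holds(p_1,t),\dots,holds(p_k,t)$ for each $\mathbf{caused}(\{p_1,\dots,p_k\},f)\in D$; (5) $occ(a,t)\leftarrow possible(a,t),\mathit{not}\,nocc(a,t)$ for each action $a$; (6) $nocc(a,t)\leftarrow occ(b,t)$ for each pair of distinct actions $a\ne b$; (7) for $t\in\{0,\dots,n-1\}$, $holds(l,t+1)\leftarrow holds(l,t),\mathit{not}\,holds(\bar l,t+1)$ for each fluent literal $l$; (8) $\bot\leftarrow holds(f,t),holds(\neg f,t)$ for each fluent $f$. For a set $M$ of atoms, $s_i(M)=\{l\mid l\text{ a fluent literal},\ holds(l,i)\in M\}$. *)

From Stdlib Require List.
From mathcomp Require Import all_boot.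
Set Implicit Arguments.
Unset Strict Implicit.
Unset Printing Implicit Defensive.

(* A fluent literal over fluents F: (f, true) is f, (f, false) is ~f. *)
Definition lit (F : finType) : finType := (F * bool)%type.
Definition pos_lit (F : finType) (f : F) : lit F := (f, true).
Definition neg_lit (F : finType) (f : F) : lit F := (f, false).
Definition compl (F : finType) (l : lit F) : lit F := (l.1, ~~ l.2).

Section ActionLanguage.
Variables (F A : finType).

(* A domain description: static causal laws caused(P, f) as (P, f),
   dynamic causal laws causes(a, f, P) as (a, f, P),
   executability conditions executable(a, P) as (a, P). *)
Record domain := Domain {
  static_laws : seq (seq (lit F) * lit F);
  dynamic_laws : seq (A * lit F * seq (lit F));
  exec_conds : seq (A * seq (lit F))
}.

Variable D : domain.

Definition lits_in (P : seq (lit F)) (u : {set lit F}) : bool :=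
  all (fun p => p \in u) P.

Definition consistent_set (u : {set lit F}) : Prop :=
  forall f : F, ~ (pos_lit f \in u /\ neg_lit f \in u).

Definition interpretation (u : {set lit F}) : Prop :=
  consistent_set u /\
  forall v : {set lit F}, consistent_set v -> u \subset v -> v = u.

Definition closed_DC (u : {set lit F}) : Prop :=
  forall Pf, Pf \in static_laws D -> lits_in Pf.1 u -> Pf.2 \in u.

(* is_Cl u v : v = Cl_{D_C}(u), i.e. v is the least consistent superset
   of u closed under D_C (in particular Cl_{D_C}(u) is defined). *)
Definition is_Cl (u v : {set lit F}) : Prop :=
  [/\ consistent_set v, closed_DC v, u \subset v &
      forall w, consistent_set w -> closed_DC w -> u \subset w -> v \subset w].

Definition state (s : {set lit F}) : Prop := interpretation s /\ closed_DC s.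

Definition executable (a : A) (s : {set lit F}) : Prop :=
  exists2 P, (a, P) \in exec_conds D & lits_in P s.

Definition E (a : A) (s : {set lit F}) : {set lit F} :=
  [set f | has (fun d : A * lit F * seq (lit F) =>
                  [&& d.1.1 == a, d.1.2 == f & lits_in d.2 s]) (dynamic_laws D)].

Definition Phi (a : A) (s s' : {set lit F}) : Prop :=
  executable a s /\ state s' /\ is_Cl (E a s :|: (s :&: s')) s'.

Definition trajectory (n : nat) (s : nat -> {set lit F}) (a : nat -> A) : Prop :=
  (forall t, t <= n -> state (s t)) /\
  (forall t, t < n -> Phi (a t) (s t) (s t.+1)).

Definition consistent_domain : Prop :=
  forall (a : A) (s : {set lit F}), state s -> executable a s ->
    exists s', Phi a s s'.

Definition s0Gamma (Gamma : seq (lit F)) : {set lit F} :=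
  [set l | l \in Gamma].

Definition consistent_theory (Gamma : seq (lit F)) : Prop :=
  consistent_domain /\ state (s0Gamma Gamma).

End ActionLanguage.

Section AnswerSets.
Variable atom : Type.

(* head = Some h : rule  h <- pos, not neg ;  head = None : constraint *)
Record rule := Rule { rhead : option atom; rpos : seq atom; rneg : seq atom }.

Definition program := rule -> Prop.

(* S' is closed under the non-constraint rules of the reduct Pi^S *)
Definition closed_reduct (Pi : program) (S S' : atom -> Prop) : Prop :=
  forall r h, Pi r -> rhead r = Some h ->
    (forall c, List.In c (rneg r) -> ~ S c) ->
    (forall b, List.In b (rpos r) -> S' b) -> S' h.

Definition answer_set (Pi : program) (S : atom -> Prop) : Prop :=
  [/\ closed_reduct Pi S S,
      (forall S', closed_reduct Pi S S' -> forall x, S x -> S' x) &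
      (forall r, Pi r -> rhead r = None ->
         (forall c, List.In c (rneg r) -> ~ S c) ->
         ~ (forall b, List.In b (rpos r) -> S b))].
End AnswerSets.

Section Program.
Variables (F A : finType).

Inductive atom :=
| Holds of lit F & nat
| Possible of A & nat
| Occ of A & nat
| Nocc of A & nat.

Variables (D : domain F A) (Gamma : seq (lit F)) (n : nat).

Definition holds_all (P : seq (lit F)) (t : nat) : seq atom :=
  map (fun p => Holds p t) P.

Inductive pi_prog : rule atom -> Prop :=
| pi1 l : l \in Gamma -> pi_prog (Rule (Some (Holds l 0)) [::] [::])
| pi2 a P t : (a, P) \in exec_conds D -> t <= n ->
    pi_prog (Rule (Some (Possible a t)) (holds_all P t) [::])
| pi3 a f P t : (a, f, P) \in dynamic_laws D -> t < n ->
    pi_prog (Rule (Some (Holds f t.+1)) (Occ a t :: Possible a t :: holds_all P t) [::])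
| pi4 P f t : (P, f) \in static_laws D -> t <= n ->
    pi_prog (Rule (Some (Holds f t)) (holds_all P t) [::])
| pi5 a t : t <= n ->
    pi_prog (Rule (Some (Occ a t)) [:: Possible a t] [:: Nocc a t])
| pi6 a b t : a != b -> t <= n ->
    pi_prog (Rule (Some (Nocc a t)) [:: Occ b t] [::])
| pi7 l t : t < n ->
    pi_prog (Rule (Some (Holds l t.+1)) [:: Holds l t] [:: Holds (compl l) t.+1])
| pi8 f t : t <= n ->
    pi_prog (Rule None [:: Holds (pos_lit f) t; Holds (neg_lit f) t] [::]).

End Program.

Arguments Holds {F A}.
Arguments Possible {F A}.
Arguments Occ {F A}.
Arguments Nocc {F A}.

From mathcomp Require Import all_boot.
From Stdlib Require Import Classical ClassicalEpsilon.

Set Implicit Arguments.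
Unset Strict Implicit.
Unset Printing Implicit Defensive.

(* The witness X is read off the trajectory: holds(l,t) for l in s_t,
   possible(b,t) when b is executable in s_t, occ(a_t,t) and nocc(b,t) for
   the other actions.  X is closed under the reduct because the trajectory is
   one.  It is also least: by induction on t, every closed superset of the
   reduct contains holds(l,t) for l in s_t, since s_{t+1} = Cl(E(a_t,s_t) ∪
   (s_t ∩ s_{t+1})), the effects are derived by rule (3), the persisting
   literals by the inertia rule (7), and the closure by rule (4).  The
   constraints (8) hold because every s_t is consistent. *)

Definition classic_pred (T : Type) (Q : T -> Prop) : pred T :=
  fun x => if excluded_middle_informative (Q x) then true else false.

Lemma classic_predP (T : Type) (Q : T -> Prop) (x : T) :
  reflect (Q x) (classic_pred Q x).
Proof. by rewrite /classic_pred; case: excluded_middle_informative; constructor. Qed.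

Lemma holds_allP (F A : finType) (S : atom F A -> Prop) (P : seq (lit F)) t :
  (forall b, List.In b (holds_all A P t) -> S b) <->
  (forall p, p \in P -> S (Holds p t)).
Proof.
elim: P => [|p P IH] /=; first by split.
split=> [H q|H b [<-|Hb]].
- rewrite inE => /predU1P [->|Hq]; first by apply: H; left.
  by apply: (IH.1 (fun b Hb => H b (or_intror Hb))).
- by apply: H; rewrite inE eqxx.
- by apply: IH.2 Hb => q Hq; apply: H; rewrite inE Hq orbT.
Qed.

Section ActionTheory.
Variables (F A : finType) (D : domain F A).

Lemma interpretation_total (u : {set lit F}) (f : F) :
  interpretation u -> pos_lit f \in u \/ neg_lit f \in u.
Proof.
case=> Hcons Hmax; apply: NNPP => Hnone.
have Hcons' : consistent_set (pos_lit f |: u).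
  move=> g []; rewrite !inE => /predU1P [[->]|Hg] /predU1P [//|Hg'].
  - by apply: Hnone; right.
  - by apply: (Hcons g).
have /setP/(_ (pos_lit f)) := Hmax _ Hcons' (subsetUr _ _).
by rewrite setU11 => /esym Hf; apply: Hnone; left.
Qed.

Lemma state_complE (s : {set lit F}) (l : lit F) :
  state D s -> (compl l \in s) = (l \notin s).
Proof.
case=> [Hint _]; case: l => f b; have [Hcons _] := Hint.
have Hcon := Hcons f; rewrite /pos_lit /neg_lit in Hcon.
have := interpretation_total f Hint; rewrite /pos_lit /neg_lit.
case: b => /= Htot; apply/idP/negP => [H1 H2|H]; try by apply: Hcon.
all: by case: Htot.
Qed.

Lemma is_Cl_ind (u v : {set lit F}) (Q : lit F -> Prop) :
  is_Cl D u v ->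
  (forall l, l \in u -> Q l) ->
  (forall P f, (P, f) \in static_laws D -> lits_in P v ->
     (forall p, p \in P -> Q p) -> Q f) ->
  forall l, l \in v -> Q l.
Proof.
case=> Hcons Hclosed Huv Hmin Hu Hstatic.
pose w := [set l in v | classic_pred Q l].
suff /subsetP Hvw : v \subset w.
  by move=> l /Hvw; rewrite inE => /andP[_ /classic_predP].
have Hwv p : p \in w -> p \in v /\ Q p by rewrite inE => /andP[? /classic_predP].
apply: Hmin.
- by move=> f [/Hwv[Hp _] /Hwv[Hn _]]; apply: (Hcons f).
- move=> [P f] Hlaw /allP /= HP.
  have HPv : lits_in P v by apply/allP => p /HP /Hwv[].
  rewrite inE (Hclosed _ Hlaw HPv); apply/classic_predP.
  by apply: (Hstatic P f Hlaw HPv) => p /HP /Hwv[].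
- apply/subsetP => l Hl; rewrite inE (subsetP Huv l Hl).
  by apply/classic_predP/Hu.
Qed.

End ActionTheory.

Section TrajectoryAnswerSet.
Variables (F A : finType) (D : domain F A) (Gamma : seq (lit F)).
Variables (n : nat) (s : nat -> {set lit F}) (a : nat -> A).
Hypotheses (traj : trajectory D n s a) (s0_init : s 0 = s0Gamma Gamma).

Local Notation pi := (pi_prog D Gamma n).

(* At t = n no action is prescribed, but rule (5) still forces one of the
   actions possible in s_n (if any) to occur. *)
Definition chosen_action (t : nat) : option A :=
  if t < n then Some (a t)
  else if t == n then [pick b | classic_pred (executable D ^~ (s n)) b]
  else None.

Definition trajectory_model (x : atom F A) : Prop :=
  match x with
  | Holds l t => t <= n /\ l \in s t
  | Possible b t => t <= n /\ executable D b (s t)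
  | Occ b t => chosen_action t = Some b
  | Nocc b t => exists2 c, chosen_action t = Some c & c <> b
  end.

Local Notation X := trajectory_model.

Lemma chosen_action_lt t : t < n -> chosen_action t = Some (a t).
Proof. by rewrite /chosen_action => ->. Qed.

Lemma chosen_action_le t b : chosen_action t = Some b -> t <= n.
Proof.
rewrite /chosen_action; case: ltnP => [/ltnW //|_].
by case: eqP => [->|].
Qed.

Lemma chosen_action_executable t b :
  chosen_action t = Some b -> executable D b (s t).
Proof.
rewrite /chosen_action; case: ltnP => [Ht [<-]|_]; first by case: (traj.2 t Ht).
case: eqP => [->|//]; by case: pickP => // c /classic_predP Hc [<-].
Qed.

Lemma chosen_action_none t b : t <= n ->
  chosen_action t = None -> ~ executable D b (s t).
Proof.
rewrite /chosen_action leq_eqVlt => /predU1P [->|->] //.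
rewrite ltnn eqxx; case: pickP => // Hnone _ Hb.
by move/(classic_predP (executable D ^~ (s n))): Hb; rewrite Hnone.
Qed.

Lemma trajectory_state t : t <= n -> state D (s t).
Proof. exact: traj.1. Qed.

Lemma trajectory_model_closed : closed_reduct pi X X.
Proof.
move=> r h; case=> /=.
- by move=> l Hl [<-] _ _; split=> //; rewrite s0_init inE.
- move=> b P t Hexec Ht [<-] _ /holds_allP HP; split=> //.
  by exists P => //; apply/allP => p /HP[].
- move=> b f P t Hlaw Ht [<-] _ Hbody.
  have Hb : b = a t.
    by have := Hbody (Occ b t) (or_introl erefl); rewrite /= chosen_action_lt // => -[].
  subst b; have [_ [_ [_ _ Hsub _]]] := traj.2 t Ht.
  have /holds_allP HP := fun x Hx => Hbody x (or_intror (or_intror Hx)).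
  have {}HP : lits_in P (s t) by apply/allP => p /HP[].
  split=> //; apply: (subsetP Hsub); rewrite !inE; apply/orP; left.
  by apply/hasP; exists (a t, f, P) => //=; rewrite !eqxx.
- move=> P f t Hlaw Ht [<-] _ /holds_allP HP; split=> //.
  by apply: (trajectory_state Ht).2 Hlaw _; apply/allP => p /HP[].
- move=> b t Ht [<-] Hneg Hbody.
  have [_ Hexec] := Hbody (Possible b t) (or_introl erefl).
  rewrite /=; case Hc: (chosen_action t) => [c|].
  + case: (eqVneq c b) => [-> //|Hcb]; exfalso.
    by apply: (Hneg (Nocc b t) (or_introl erefl)); exists c => //; apply/eqP.
  + by case: (chosen_action_none Ht Hc Hexec).
- move=> b c t Hbc Ht [<-] _ Hbody.
  exists c; first exact: (Hbody (Occ c t) (or_introl erefl)).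
  by move=> Ecb; rewrite Ecb eqxx in Hbc.
- move=> l t Ht [<-] Hneg Hbody.
  have [_ Hl] := Hbody (Holds l t) (or_introl erefl).
  split=> //; apply: negbNE; rewrite -(state_complE _ (trajectory_state Ht)).
  by apply/negP => Hc; apply: (Hneg (Holds (compl l) t.+1) (or_introl erefl)).
- by [].
Qed.

Section Least.
Variable S : atom F A -> Prop.
Hypothesis S_closed : closed_reduct pi X S.

Lemma least_possible t b : t <= n ->
  (forall l, l \in s t -> S (Holds l t)) ->
  executable D b (s t) -> S (Possible b t).
Proof.
move=> Ht Hholds [P Hexec /allP HP].
apply: (S_closed (pi2 Gamma Hexec Ht)) => //=.
by apply/holds_allP => p /HP; apply: Hholds.
Qed.

Lemma least_occ t b :
  (forall l, l \in s t -> S (Holds l t)) ->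
  chosen_action t = Some b -> S (Occ b t).
Proof.
move=> Hholds Hc; have Ht := chosen_action_le Hc.
apply: (S_closed (pi5 D Gamma b Ht)) => //= x.
- by case=> // <- [c]; rewrite Hc => -[->].
- by case=> // <-; apply: least_possible => //; apply: chosen_action_executable.
Qed.

Lemma least_holds t : t <= n -> forall l, l \in s t -> S (Holds l t).
Proof.
elim: t => [|t IH] Ht.
  by move=> l; rewrite s0_init inE => Hl; apply: (S_closed (pi1 D n Hl)).
have {}IH := IH (ltnW Ht); have [_ [_ Hcl]] := traj.2 t Ht.
apply: (is_Cl_ind (Q := fun l => S (Holds l t.+1)) Hcl) => [l|P f Hlaw _ HP].
- rewrite !inE => /orP [/hasP [[[b g] P] Hdyn /= /and3P [/eqP Eb /eqP Eg HPs]]|].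
  + subst b g; apply: (S_closed (pi3 Gamma Hdyn Ht)) => //= x.
    case=> [<-|[<-|]]; last by move: x; apply/holds_allP => p /(allP HPs)/IH.
    * by apply: least_occ => //; rewrite chosen_action_lt.
    * by apply: least_possible => //; [exact: ltnW | case: (traj.2 t Ht)].
  + move=> /andP [Hl Hl1]; apply: (S_closed (pi7 D Gamma l Ht)) => //= x.
    * case=> // <- [_]; by rewrite (state_complE _ (trajectory_state Ht)) Hl1.
    * by case=> // <-; apply: IH.
- by apply: (S_closed (pi4 Gamma Hlaw Ht)) => //=; apply/holds_allP.
Qed.

Lemma trajectory_model_least x : X x -> S x.
Proof.
case: x => [l t [Ht Hl]|b t [Ht Hb]|b t Hc|b t [c Hc Hcb]].
- exact: least_holds.
- by apply: least_possible => //; apply: least_holds.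
- by apply: (least_occ _ Hc); apply: least_holds (chosen_action_le Hc).
- have Ht := chosen_action_le Hc.
  apply: (S_closed (pi6 D Gamma (b := c) _ Ht)) => //=.
    by apply/eqP => Ebc; apply: Hcb.
  by move=> x [<-|//]; apply: (least_occ _ Hc); apply: least_holds.
Qed.

End Least.

Lemma trajectory_model_constraints r : pi r -> rhead r = None ->
  (forall c, List.In c (rneg r) -> ~ X c) ->
  ~ (forall b, List.In b (rpos r) -> X b).
Proof.
case=> //= f t Ht _ _ Hbody.
have [_ Hpos] := Hbody (Holds (pos_lit f) t) (or_introl erefl).
have [_ Hneg] := Hbody (Holds (neg_lit f) t) (or_intror (or_introl erefl)).
by have [[Hcons _] _] := trajectory_state Ht; apply: (Hcons f).
Qed.

Lemma trajectory_model_answer_set : answer_set pi X.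
Proof.
split; [exact: trajectory_model_closed | | exact: trajectory_model_constraints].
by move=> S HS x; apply: trajectory_model_least.
Qed.

End TrajectoryAnswerSet.

Theorem mainTheorem6 (F A : finType) (D : domain F A) (Gamma : seq (lit F))
    (n : nat) (s : nat -> {set lit F}) (a : nat -> A) :
  consistent_theory D Gamma ->
  trajectory D n s a ->
  s 0 = s0Gamma Gamma ->
  exists X : atom F A -> Prop,
    answer_set (pi_prog D Gamma n) X /\
    (forall t, t <= n -> forall l : lit F, X (Holds l t) <-> l \in s t) /\
    (forall t, t < n -> X (Occ (a t) t)).
Proof.
move=> _ traj s0_init; exists (trajectory_model D n s a); split.
  exact: trajectory_model_answer_set.
split=> [t Ht l|t Ht]; first by split=> [[]|].
exact: chosen_action_lt.
Qed.
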